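(* Let $\mathcal{X}_k \in \{\mathcal{E}_k, \mathcal{F}_k\}$ for $1 \leq k \leq n$. For any $\lambda \in R$ and $1< i,j \leq n$, \[1 + \lambda \mathcal{X}_i\mathcal{X}_j = [1+ \lambda \mathcal{X}_i\mathcal{X}_1,\ 1 + \mathcal{X}_1\mathcal{X}_j].\]
   Context: Let $R$ be a commutative ring. For $v=(a_1,\dots,a_n), w=(b_1,\dots,b_n)\in R^n$ the Suslin matrix $\mathcal{S}_{n-1}(v,w)$ is defined recursively: $\mathcal{S}_1(v,w)=\begin{pmatrix} a_1 & a_2\\ -b_2 & b_1\end{pmatrix}$, $\overline{\mathcal{S}_1(v,w)}=\begin{pmatrix} b_1 & -a_2\\ b_2 & a_1\end{pmatrix}$, and with $v=(a_1,v')$, $w=(b_1,w')$, $\mathcal{S}_{n-1}(v,w)=\begin{pmatrix} a_1 & \mathcal{S}_{n-2}(v',w')\\ -\overline{\mathcal{S}_{n-2}(v',w')} & b_1\end{pmatrix}$, $\overline{\mathcal{S}_{n-1}(v,w)}=\begin{pmatrix} b_1 & -\mathcal{S}_{n-2}(v',w')\\ \overline{\mathcal{S}_{n-2}(v',w')} & a_1\end{pmatrix}$. Set $\mathcal{E}_i = \mathcal{S}_{n-1}(e_i,0)$, $\mathcal{F}_i = \mathcal{S}_{n-1}(0,f_i)$ for standard basis vectors $e_i$, $f_i$. The commutator is $[a,b]=aba^{-1}b^{-1}$. *)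

From HB Require Import structures.
From mathcomp Require Import all_boot all_order all_algebra.
Set Implicit Arguments. Unset Strict Implicit. Unset Printing Implicit Defensive.
Import GRing.Theory.
Local Open Scope ring_scope.

(* Size of the Suslin matrix S_m : dsz m = 2^m, defined so that block matrices
   of size dsz m + dsz m are convertibly of size dsz m.+1. *)
Fixpoint dsz (m : nat) : nat := if m is m'.+1 then (dsz m' + dsz m')%N else 1%N.

Lemma dszE m : dsz m = (2 ^ m)%N.
Proof. elim: m => //= m ->; by rewrite expnS mul2n addnn. Qed.

(* suslin_pair m v w = (S_m(v,w), bar S_m(v,w)) where v w : nat -> R are
   0-indexed coordinate functions (v 0 = a_1, v 1 = a_2, ...), using the
   coordinates 0..m.  Base case m = 0: S_0(a,b) = a, bar S_0(a,b) = b (1x1);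
   for m = 1 this reproduces exactly the paper's S_1 and bar S_1. *)
Fixpoint suslin_pair (R : comNzRingType) (m : nat) (v w : nat -> R)
  : 'M[R]_(dsz m) * 'M[R]_(dsz m) :=
  match m return 'M[R]_(dsz m) * 'M[R]_(dsz m) with
  | 0 => ((v 0%N)%:M, (w 0%N)%:M)
  | m'.+1 =>
      let p := suslin_pair m' (fun k => v k.+1) (fun k => w k.+1) in
      (block_mx (v 0%N)%:M p.1 (- p.2) (w 0%N)%:M,
       block_mx (w 0%N)%:M (- p.1) p.2 (v 0%N)%:M)
  end.

Definition coord_fun (R : comNzRingType) (n : nat) (v : 'rV[R]_n) (k : nat) : R :=
  match insub k with Some i => v 0 i | None => 0 end.

Definition suslin (R : comNzRingType) (n : nat) (v w : 'rV[R]_n) : 'M[R]_(dsz n.-1) :=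
  (suslin_pair n.-1 (coord_fun v) (coord_fun w)).1.

(* standard basis vector e_i of R^n, 1-based index i *)
Definition std_vec (R : comNzRingType) (n i : nat) : 'rV[R]_n :=
  \row_(k < n) (((k : nat) == i.-1)%:R).

Definition suslinE (R : comNzRingType) (n i : nat) : 'M[R]_(dsz n.-1) :=
  suslin (std_vec R n i) 0.
Definition suslinF (R : comNzRingType) (n i : nat) : 'M[R]_(dsz n.-1) :=
  suslin 0 (std_vec R n i).

Definition mxcomm (R : comUnitRingType) (k : nat) (a b : 'M[R]_k) : 'M[R]_k :=
  a *m b *m invmx a *m invmx b.

(* Relative to the idempotent e := X_1 = diag(1,0) or diag(0,1), every X_k with
   k > 1 is block off-diagonal: e X_k + X_k e = X_k.  Suslin's identity
   S(v,w) bar S(v,w) = <v,w> I and its polarization give X_k^2 = 0 and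
   X_i X_j = - X_j X_i for i, j > 1, because the first and second arguments of
   these Suslin matrices are orthogonal.  For such e, x, y in any ring,
   a := x e and b := e y satisfy a^2 = b^2 = aba = 0, ab - ba = xy and xy b = 0,
   and then [1 + a, 1 + b] = (1 + a)(1 + b)(1 - a)(1 - b) = 1 + xy.
   Take x = lambda X_i and y = X_j. *)

From mathcomp Require Import all_boot all_order all_algebra ring.
Set Implicit Arguments. Unset Strict Implicit. Unset Printing Implicit Defensive.
Import GRing.Theory.
Local Open Scope ring_scope.

Lemma inv_1add_sqr0 (T : unitRingType) (a : T) : a * a = 0 -> (1 + a)^-1 = 1 - a.
Proof.
move=> a2; have inv_r : (1 + a) * (1 - a) = 1.
  by rewrite mulrBr mulr1 mulrDl mul1r a2 addr0 addrK.
have unit_1a : 1 + a \is a GRing.unit.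
  apply/unitrP; exists (1 - a); split=> //.
  by rewrite mulrDr mulr1 mulrBl mul1r a2 subr0 subrK.
by apply: (mulrI unit_1a); rewrite mulrV.
Qed.

Lemma unipotent_commutator (T : ringType) (a b c : T) :
  a * a = 0 -> b * b = 0 -> a * b * a = 0 -> a * b - b * a = c -> c * b = 0 ->
  (1 + a) * (1 + b) * (1 - a) * (1 - b) = 1 + c.
Proof.
move=> a2 b2 aba ab_ba cb.
have conj_b : (1 + a) * (1 + b) * (1 - a) = 1 + b + c.
  rewrite -ab_ba !(mulrDl, mulrDr, mulrBl, mulrBr) !(mul1r, mulr1).
  by rewrite !mulrN a2 aba !oppr0 !addr0 -addrA (addrACA a) addrN add0r.
rewrite conj_b mulrBr mulr1 !mulrDl mul1r b2 cb !addr0.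
by rewrite (addrAC (1 + b)) addrK.
Qed.

Lemma idem_sandwich (T : ringType) (e z : T) :
  e * e = e -> e * z + z * e = z -> e * z * e = 0.
Proof.
move=> e2 ez; apply: (@addrI _ (e * z)); rewrite addr0.
by rewrite -[in RHS]ez mulrDr mulrA e2 mulrA.
Qed.

Lemma idem_sandwich_sqr0 (T : ringType) (e z : T) :
  e * z + z * e = z -> z * z = 0 -> z * e * z = 0.
Proof.
move=> ez z2; have -> : z * e = z - e * z.
  by rewrite -[X in X - _]ez [e * z + _]addrC addrK.
by rewrite mulrBl z2 -mulrA z2 mulr0 subr0.
Qed.

Lemma commutator_off_diagonal (T : unitRingType) (e x y : T) :
  e * e = e -> e * x + x * e = x -> e * y + y * e = y ->
  x * y + y * x = 0 -> x * x = 0 -> y * y = 0 ->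
  1 + x * y = (1 + x * e) * (1 + e * y) * (1 + x * e)^-1 * (1 + e * y)^-1.
Proof.
move=> e2 ex ey xy_anti x2 y2.
have exe := idem_sandwich e2 ex; have eye := idem_sandwich e2 ey.
have xex := idem_sandwich_sqr0 ex x2; have yey := idem_sandwich_sqr0 ey y2.
have yx : - (x * y) = y * x := addr0_eq xy_anti.
have a2 : x * e * (x * e) = 0 by rewrite mulrA xex mul0r.
have b2 : e * y * (e * y) = 0 by rewrite mulrA eye mul0r.
have ab : x * e * (e * y) = x * e * y by rewrite mulrA -(mulrA x e e) e2.
have ba : e * y * (x * e) = - (e * x * y * e).
  by rewrite !mulrA -(mulrA e y x) -yx mulrN mulNr !mulrA.
have aba : x * e * (e * y) * (x * e) = 0.
  by rewrite ab !mulrA -(mulrA (x * e) y x) -yx mulrN mulNr !mulrA xex !mul0r oppr0.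
have exy : e * x * y = e * x * y * e.
  by rewrite -{1}ey mulrDr mulrA exe mul0r add0r !mulrA.
have ab_ba : x * e * (e * y) - e * y * (x * e) = x * y.
  by rewrite ab ba opprK -[in RHS]ex mulrDl -exy addrC.
have cb : x * y * (e * y) = 0 by rewrite mulrA -(mulrA x y e) -mulrA yey mulr0.
rewrite (inv_1add_sqr0 a2) (inv_1add_sqr0 b2).
exact/esym/(unipotent_commutator a2 b2 aba ab_ba cb).
Qed.

Lemma mxcomm_off_diagonal (R : comUnitRingType) N (e x y : 'M[R]_N) :
  e *m e = e -> e *m x + x *m e = x -> e *m y + y *m e = y ->
  x *m y + y *m x = 0 -> x *m x = 0 -> y *m y = 0 ->
  1%:M + x *m y = mxcomm (1%:M + x *m e) (1%:M + e *m y).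
Proof.
case: N e x y => [|N] e x y; first by move=> *; rewrite [LHS]flatmx0 [RHS]flatmx0.
rewrite /mxcomm !mulmxE !idmxE; exact: commutator_off_diagonal.
Qed.

Section SuslinPair.
Variable R : comNzRingType.
Implicit Types v w : nat -> R.
Local Notation sp := (@suslin_pair R).

Lemma suslin_pair_ext m v w v' w' : v =1 v' -> w =1 w' -> sp m v w = sp m v' w'.
Proof.
elim: m v w v' w' => [|m IH] v w v' w' eq_v eq_w /=; first by rewrite eq_v eq_w.
by rewrite (IH _ _ (fun k => v' k.+1) (fun k => w' k.+1)) // eq_v eq_w.
Qed.

Lemma suslin_pair0 m : sp m (fun=> 0) (fun=> 0) = (0, 0).
Proof.
elim: m => [|m IH] /=; first by rewrite raddf0.
by rewrite IH raddf0 oppr0 block_mx0.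
Qed.

Lemma suslin_pair_mul_bar m v w :
  (sp m v w).1 *m (sp m v w).2 = (\sum_(t < m.+1) v t * w t)%:M /\
  (sp m v w).2 *m (sp m v w).1 = (\sum_(t < m.+1) v t * w t)%:M.
Proof.
elim: m v w => [|m IH] v w /=; first by rewrite big_ord1 -!scalar_mxM mulrC.
have [IH1 IH2] := IH (fun k => v k.+1) (fun k => w k.+1).
rewrite big_ord_recl !mulmx_block !mulNmx !mulmxN IH1 IH2 -!scalar_mxM.
rewrite !mul_scalar_mx !mul_mx_scalar opprK (mulrC (w 0%N)).
by split; rewrite [RHS]scalar_mx_block !raddfD /= ?addNr ?subrr
  [_ + (v 0%N * w 0%N)%:M]addrC.
Qed.

Lemma suslin_pair_mul_bar_polar m v w v' w' :
  (sp m v w).1 *m (sp m v' w').2 + (sp m v' w').1 *m (sp m v w).2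
    = (\sum_(t < m.+1) (v t * w' t + v' t * w t))%:M /\
  (sp m v w).2 *m (sp m v' w').1 + (sp m v' w').2 *m (sp m v w).1
    = (\sum_(t < m.+1) (v t * w' t + v' t * w t))%:M.
Proof.
elim: m v w v' w' => [|m IH] v w v' w' /=.
  by rewrite big_ord1 -!scalar_mxM -!raddfD /= (mulrC (w 0%N)) (mulrC (w' 0%N)) addrC.
have [IH1 IH2] :=
  IH (fun k => v k.+1) (fun k => w k.+1) (fun k => v' k.+1) (fun k => w' k.+1).
rewrite big_ord_recl !mulmx_block !add_block_mx !mulNmx !mulmxN -!scalar_mxM.
rewrite !mul_scalar_mx !mul_mx_scalar !opprK.
split; rewrite [RHS]scalar_mx_block; congr block_mx.
all: try by rewrite addrA addrK addNr.
all: try by rewrite addrA subrK addrN.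
all: by rewrite addrACA ?IH1 ?IH2 -!raddfD; congr (_%:M); ring.
Qed.

Section FirstCoordinatesZero.
Variables (m : nat) (v w v' w' : nat -> R).
Hypotheses (v0 : v 0%N = 0) (w0 : w 0%N = 0) (v'0 : v' 0%N = 0) (w'0 : w' 0%N = 0).

Lemma suslin_pair_sqr_coord0 :
  (sp m.+1 v w).1 *m (sp m.+1 v w).1 = - (\sum_(t < m.+2) v t * w t)%:M.
Proof.
have [PPbar PbarP] := suslin_pair_mul_bar m (fun k => v k.+1) (fun k => w k.+1).
rewrite /= v0 w0 raddf0 mulmx_block !mulmx0 !mul0mx !mulmxN !mulNmx PPbar PbarP.
rewrite (big_ord_recl m.+1) /= v0 mul0r !add0r !addr0.
by rewrite -!raddfN [RHS]scalar_mx_block.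
Qed.

Lemma suslin_pair_anticomm_coord0 :
  (sp m.+1 v w).1 *m (sp m.+1 v' w').1 + (sp m.+1 v' w').1 *m (sp m.+1 v w).1
    = - (\sum_(t < m.+2) (v t * w' t + v' t * w t))%:M.
Proof.
have [polar polar_bar] :=
  suslin_pair_mul_bar_polar m (fun k => v k.+1) (fun k => w k.+1)
                              (fun k => v' k.+1) (fun k => w' k.+1).
rewrite /= v0 w0 v'0 w'0 raddf0 !mulmx_block !mulmx0 !mul0mx !mulmxN !mulNmx.
rewrite !addr0 !add0r add_block_mx -!opprD polar polar_bar.
by rewrite (big_ord_recl m.+1) /= v0 v'0 !mul0r !add0r -!raddfN [RHS]scalar_mx_block.
Qed.

Lemma diag_anticomm_suslin_pair_coord0 (a b : R) :
  let D := block_mx a%:M 0 0 b%:M in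
  D *m (sp m.+1 v w).1 + (sp m.+1 v w).1 *m D = (a + b) *: (sp m.+1 v w).1.
Proof.
rewrite /= v0 w0 raddf0 !mulmx_block add_block_mx !mulmx0 !mul0mx !addr0 !add0r.
by rewrite !mul_scalar_mx !mul_mx_scalar -!scalerDl scale_block_mx scaler0 addrC.
Qed.

End FirstCoordinatesZero.
End SuslinPair.

Section SuslinBasis.
Variables (R : comNzRingType) (c : nat -> bool).

Lemma coord_fun_std_vec n k t :
  coord_fun (std_vec R n k) t = ((t < n)%N && (t == k.-1))%:R.
Proof.
rewrite /coord_fun; case: insubP => [u t_lt_n <-|t_ge_n]; first by rewrite mxE ltn_ord.
by rewrite (negbTE t_ge_n).
Qed.

Lemma coord_fun0 n t : coord_fun (0 : 'rV[R]_n) t = 0.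
Proof. by rewrite /coord_fun; case: insubP => [u _ _|_]; rewrite ?mxE. Qed.

Definition basis_coord n k (b : bool) t : R := (b && (t < n)%N && (t == k.-1))%:R.

Definition suslin_basis n k : 'M[R]_(dsz n.-1) :=
  if c k then suslinE R n k else suslinF R n k.

Lemma suslin_basisE n k : suslin_basis n k
  = (suslin_pair n.-1 (basis_coord n k (c k)) (basis_coord n k (~~ c k))).1.
Proof.
rewrite /suslin_basis /suslinE /suslinF /suslin.
by case: (c k); congr (_.1); apply: suslin_pair_ext => t;
  rewrite /basis_coord ?coord_fun_std_vec ?coord_fun0.
Qed.

Lemma basis_coord0 n k b : (1 < k)%N -> basis_coord n k b 0 = 0.
Proof. by case: k => [|[|k]] //; rewrite /basis_coord andbF. Qed.

Lemma basis_coord_mul n k l t : (0 < k)%N -> (0 < l)%N ->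
  basis_coord n k (c k) t * basis_coord n l (~~ c l) t = 0.
Proof.
move=> k_gt0 l_gt0; rewrite /basis_coord -natrM mulnb.
have [->|] := eqVneq t k.-1; last by rewrite !andbF.
have [kl|] := eqVneq k.-1 l.-1; last by rewrite !andbF.
have -> : k = l by rewrite -(prednK k_gt0) kl prednK.
by case: (c l); rewrite ?andbF.
Qed.

Lemma suslin_basis_sqr m k : (1 < k)%N ->
  suslin_basis m.+2 k *m suslin_basis m.+2 k = 0.
Proof.
move=> k_gt1; rewrite suslin_basisE suslin_pair_sqr_coord0 ?basis_coord0 //.
by rewrite big1 ?raddf0 ?oppr0 // => t _; rewrite basis_coord_mul // ltnW.
Qed.

Lemma suslin_basis_anticomm m k l : (1 < k)%N -> (1 < l)%N ->
  suslin_basis m.+2 k *m suslin_basis m.+2 l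
    + suslin_basis m.+2 l *m suslin_basis m.+2 k = 0.
Proof.
move=> k_gt1 l_gt1; rewrite !suslin_basisE suslin_pair_anticomm_coord0 ?basis_coord0 //.
by rewrite big1 ?raddf0 ?oppr0 // => t _; rewrite !basis_coord_mul ?addr0 // ltnW.
Qed.

Lemma suslin_basis1 m :
  suslin_basis m.+2 1 = block_mx (c 1)%:R%:M 0 0 (~~ c 1)%:R%:M.
Proof.
rewrite suslin_basisE /= (@suslin_pair_ext _ _ _ _ (fun=> 0) (fun=> 0)).
  by rewrite suslin_pair0 oppr0 /basis_coord !andbT.
all: by move=> t; rewrite /basis_coord andbF.
Qed.

Lemma suslin_basis1_idem m :
  suslin_basis m.+2 1 *m suslin_basis m.+2 1 = suslin_basis m.+2 1.
Proof.
rewrite suslin_basis1 mulmx_block !mulmx0 !mul0mx !addr0 !add0r -!scalar_mxM.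
by case: (c 1); rewrite /= ?mulr1 ?mulr0.
Qed.

Lemma suslin_basis1_anticomm m k : (1 < k)%N ->
  suslin_basis m.+2 1 *m suslin_basis m.+2 k
    + suslin_basis m.+2 k *m suslin_basis m.+2 1 = suslin_basis m.+2 k.
Proof.
move=> k_gt1; rewrite suslin_basis1 suslin_basisE.
rewrite diag_anticomm_suslin_pair_coord0 ?basis_coord0 //.
by case: (c 1); rewrite /= ?addr0 ?add0r scale1r.
Qed.

End SuslinBasis.

Theorem theorem2p3 (R : comUnitRingType) (n : nat) (c : nat -> bool)
  (lambda : R) (i j : nat) :
  (1 < i <= n)%N -> (1 < j <= n)%N ->
  let X := fun k => if c k then suslinE R n k else suslinF R n k in
  1%:M + lambda *: (X i *m X j)
  = mxcomm (1%:M + lambda *: (X i *m X 1%N)) (1%:M + X 1%N *m X j).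
Proof.
move=> /andP[i_gt1 i_le_n] /andP[j_gt1 _].
have [m ->] : exists m, n = m.+2.
  by case: n i_le_n (leq_trans i_gt1 i_le_n) => [|[|m]] // _ _; exists m.
move=> X; have XE k : X k = suslin_basis R c m.+2 k by [].
rewrite !XE !scalemxAl; apply: mxcomm_off_diagonal.
- exact: suslin_basis1_idem.
- by rewrite -scalemxAr -scalemxAl -scalerDr suslin_basis1_anticomm.
- exact: suslin_basis1_anticomm.
- by rewrite -scalemxAl -scalemxAr -scalerDr suslin_basis_anticomm ?scaler0.
- by rewrite -scalemxAl -scalemxAr suslin_basis_sqr ?scaler0.
- exact: suslin_basis_sqr.
Qed.
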